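(* Let $(X,\|\cdot\|_X)$ be a normed linear space. The following are equivalent: (i) $\Delta_X^{(c)}(R)<\infty$ for some $R\in(0,\infty)$; (ii) there is $C\in[0,\infty)$ such that $\Delta_X^{(c)}(R)\leq CR$ for all $R\in[0,\infty)$; (iii) $\Delta_X^{(c)}(R)<\infty$ for all $R\in[0,\infty)$ (the coarse Stone property); (iv) $\Delta_X^{(u)}(r)>0$ for all $r>0$ (the uniform Stone property).
   Context: For a cover $\mathcal{U}$ of $X$: $\mathrm{diam}(\mathcal{U})=\sup_{U\in\mathcal{U}}\mathrm{diam}(U)$; $\mathcal{L}(\mathcal{U})=\sup\{d\in[0,\infty): \text{every } E\subseteq X \text{ with } \mathrm{diam}(E)<d \text{ is contained in some } U\in\mathcal{U}\}$; point-finite means each point lies in only finitely many members. $\Delta_X^{(u)}(r)=\sup\{\mathcal{L}(\mathcal{U}): \mathcal{U} \text{ point-finite cover of } X,\ \mathrm{diam}(\mathcal{U})\leq r\}$, $\Delta_X^{(c)}(R)=\inf\{\mathrm{diam}(\mathcal{U}): \mathcal{U} \text{ point-finite cover of } X,\ \mathcal{L}(\mathcal{U})\geq R\}$. *)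

From mathcomp Require Import all_boot all_order all_algebra.
From mathcomp Require Import all_classical all_reals all_analysis.
Set Implicit Arguments. Unset Strict Implicit. Unset Printing Implicit Defensive.
Import Order.TTheory GRing.Theory Num.Theory.
Import numFieldNormedType.Exports.
Local Open Scope classical_set_scope.
Local Open Scope ring_scope.

Section StoneDefs.
Variables (R : realType) (X : normedModType R).

(* diameter of a subset, in [0, +oo]; convention diam set0 = 0 *)
Definition diam (E : set X) : \bar R :=
  ereal_sup ([set 0%E] `|` [set z | exists x y, E x /\ E y /\ z = (`|x - y|)%:E]).

Definition is_cover (U : set (set X)) : Prop :=
  forall x : X, exists A, U A /\ A x.

Definition point_finite (U : set (set X)) : Prop :=
  forall x : X, finite_set [set A | U A /\ A x].

Definition cover_diam (U : set (set X)) : \bar R :=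
  ereal_sup [set diam A | A in U].

Definition lebesgue_number (U : set (set X)) : \bar R :=
  ereal_sup [set d%:E | d in [set d : R | 0 <= d /\
     forall E : set X, (diam E < d%:E)%E -> exists A, U A /\ E `<=` A]].

Definition Delta_u (r : R) : \bar R :=
  ereal_sup [set lebesgue_number U | U in [set U | is_cover U /\ point_finite U
                                          /\ (cover_diam U <= r%:E)%E]].

Definition Delta_c (Rr : R) : \bar R :=
  ereal_inf [set cover_diam U | U in [set U | is_cover U /\ point_finite U
                                          /\ (Rr%:E <= lebesgue_number U)%E]].
End StoneDefs.

From mathcomp Require Import all_boot all_order all_algebra.
From mathcomp Require Import all_classical all_reals all_analysis.
From mathcomp Require Import lra.
Import Order.TTheory GRing.Theory Num.Theory.
Import numFieldNormedType.Exports.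
Local Open Scope classical_set_scope.
Local Open Scope ring_scope.

(* Dilating a cover by a factor t > 0 multiplies its diameter and its Lebesgue
   number by t, so Delta^(c)(t R) <= t Delta^(c)(R) and
   t Delta^(u)(r) <= Delta^(u)(t r). Finiteness of Delta^(c) at one radius
   therefore propagates to all radii, with linear growth. The coarse and uniform
   moduli are linked by a single cover: one with diameter < r and Lebesgue
   number >= R' witnesses both Delta^(c)(R') <= r and Delta^(u)(r) >= R'. *)

Lemma gt0_exists_fin_lt {R : realType} (x : \bar R) :
  (0 < x)%E -> exists2 d : R, 0 < d & (d%:E < x)%E.
Proof.
case: x => [e||] //= e0; last by exists 1; rewrite ?ltry.
by exists (e / 2); rewrite ?lte_fin; rewrite lte_fin in e0; lra.
Qed.

Section Dilation.
Context {R : realType} {X : normedModType R}.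
Implicit Types (t d : R) (A E : set X) (U : set (set X)).

Definition scale_set t A : set X := [set x | A (t^-1 *: x)].

Definition scale_cover t U : set (set X) := [set scale_set t A | A in U].

Definition is_lebesgue_radius U d : Prop := 0 <= d /\
  forall E, (diam E < d%:E)%E -> exists A, U A /\ E `<=` A.

Lemma diam_ge0 A : (0 <= diam A)%E.
Proof. by apply: ereal_sup_ubound; left. Qed.

Lemma diam_scale t A : 0 < t -> diam (scale_set t A) = (t%:E * diam A)%E.
Proof.
move=> t0; have tN0 : t != 0 by rewrite gt_eqF.
rewrite /diam -ereal_sup_pZl //; congr ereal_sup; apply/seteqP; split.
- move=> _ [->|[x [y [Ax [Ay ->]]]]]; first by exists 0%E; [left | rewrite mule0].
  exists (`|t^-1 *: x - t^-1 *: y|)%:E; first by right; exists (t^-1 *: x), (t^-1 *: y).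
  by rewrite -EFinM -scalerBr normrZ gtr0_norm ?invr_gt0 // mulVKf.
- move=> _ [_ [->|[a [b [Aa [Ab ->]]]]] <-]; first by left; rewrite mule0.
  right; exists (t *: a), (t *: b); rewrite /scale_set /= !scalerK //.
  by rewrite -EFinM -scalerBr normrZ gtr0_norm.
Qed.

Lemma cover_diam_ge0 U : is_cover U -> (0 <= cover_diam U)%E.
Proof.
move=> /(_ 0) [A [UA _]]; apply: le_trans (diam_ge0 A) _.
by apply: ereal_sup_ubound; exists A.
Qed.

Lemma cover_diam_scale t U :
  0 < t -> cover_diam (scale_cover t U) = (t%:E * cover_diam U)%E.
Proof.
move=> t0; rewrite /cover_diam -ereal_sup_pZl // !image_comp.
by congr ereal_sup; apply: eq_imagel => A _ /=; rewrite diam_scale.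
Qed.

Lemma is_lebesgue_radius_scale t U d : 0 < t ->
  is_lebesgue_radius U d -> is_lebesgue_radius (scale_cover t U) (t * d).
Proof.
move=> t0 [d0 Ud]; split; first exact: mulr_ge0 (ltW t0) d0.
move=> E diamE; have tN0 : t != 0 by rewrite gt_eqF.
have [|A [UA sEA]] := Ud (scale_set t^-1 E).
  by rewrite diam_scale ?invr_gt0 // lte_pdivrMl // EFinM.
exists (scale_set t A); split; first by exists A.
by move=> x Ex; apply: sEA; rewrite /scale_set /= invrK scalerKV.
Qed.

Lemma lebesgue_number_ge0 U : (0 <= lebesgue_number U)%E.
Proof.
apply: ereal_sup_ubound; exists 0 => //; split => // E.
by rewrite ltNge diam_ge0.
Qed.

Lemma le_lebesgue_number_scale t U : 0 < t ->
  (t%:E * lebesgue_number U <= lebesgue_number (scale_cover t U))%E.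
Proof.
move=> t0; rewrite /lebesgue_number -ereal_sup_pZl //.
apply: ereal_sup_le => _ [_ [d Ud <-] <-].
by exists (t * d); [exact: is_lebesgue_radius_scale | rewrite EFinM].
Qed.

Lemma is_cover_scale t U : is_cover U -> is_cover (scale_cover t U).
Proof.
move=> cU x; have [A [UA Ax]] := cU (t^-1 *: x).
by exists (scale_set t A); split => //; exists A.
Qed.

Lemma point_finite_scale t U : point_finite U -> point_finite (scale_cover t U).
Proof.
move=> pU x.
apply: (@sub_finite_set _ _ (scale_set t @` [set A | U A /\ A (t^-1 *: x)])).
  by move=> _ [[A UA <-] Ax]; exists A.
exact/finite_image/pU.
Qed.

End Dilation.

Section StoneModuli.
Context {R : realType} {X : normedModType R}.

Lemma Delta_c_ge0 (r : R) : (0 <= Delta_c X r)%E.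
Proof. by apply: le_ereal_inf_tmp => _ [U [cU _] <-]; exact: cover_diam_ge0. Qed.

Lemma Delta_c0 : Delta_c X 0 = 0%E.
Proof.
apply/le_anti; rewrite Delta_c_ge0 andbT.
pose U := [set [set x] | x in [set: X]].
have cU : is_cover U by move=> x; exists [set x]; split => //; exists x.
have pU : point_finite U.
  move=> x; apply: (sub_finite_set _ (finite_set1 [set x])).
  by move=> _ [[y _ <-] /= ->].
apply: le_trans (ereal_inf_lbound _) _.
  by exists U => //; do 2 split => //; exact: lebesgue_number_ge0.
apply: ge_ereal_sup => _ [_ [x _ <-] <-].
by apply: ge_ereal_sup => _ [->|[a [b [-> [-> ->]]]]]; rewrite ?subrr ?normr0.
Qed.

Lemma Delta_c_scale_le (t r : R) : 0 <= t ->
  (Delta_c X (t * r) <= t%:E * Delta_c X r)%E.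
Proof.
rewrite le_eqVlt => /predU1P[<-|t0]; first by rewrite mul0r mul0e Delta_c0.
rewrite /Delta_c -ereal_inf_pZl //; apply: ereal_inf_le_tmp.
move=> _ [_ [U [cU [pU rU]] <-] <-].
exists (scale_cover t U); last exact: cover_diam_scale.
split; [exact: is_cover_scale | split; first exact: point_finite_scale].
by apply: le_trans (le_lebesgue_number_scale t U t0); rewrite EFinM lee_pmul2l.
Qed.

Lemma Delta_u_scale_ge (t r : R) : 0 < t ->
  (t%:E * Delta_u X r <= Delta_u X (t * r))%E.
Proof.
move=> t0; rewrite /Delta_u -ereal_sup_pZl //.
apply: ge_ereal_sup => _ [_ [U [cU [pU dU]] <-] <-].
apply: le_trans (le_lebesgue_number_scale t U t0) (ereal_sup_ubound _).
exists (scale_cover t U) => //.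
split; [exact: is_cover_scale | split; first exact: point_finite_scale].
by rewrite cover_diam_scale // EFinM lee_pmul2l.
Qed.

Lemma Delta_u_ge_of_Delta_c_lt (r' r : R) :
  (Delta_c X r' < r%:E)%E -> (r'%:E <= Delta_u X r)%E.
Proof.
move=> /ereal_inf_lt [_ [U [cU [pU rU]] <-] dU].
apply: le_trans rU (ereal_sup_ubound _); exists U => //.
by do 2 split => //; exact: ltW.
Qed.

Lemma Delta_c_le_of_Delta_u_gt (r' r : R) :
  (r'%:E < Delta_u X r)%E -> (Delta_c X r' <= r%:E)%E.
Proof.
move=> /ereal_sup_gt [_ [U [cU [pU dU]] <-] rU].
apply: le_trans (ereal_inf_lbound _) dU; exists U => //.
by do 2 split => //; exact: ltW.
Qed.

Lemma Delta_c_fineK (r : R) :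
  (Delta_c X r < +oo)%E -> (fine (Delta_c X r))%:E = Delta_c X r.
Proof. by move=> fin; rewrite fineK // ge0_fin_numE // Delta_c_ge0. Qed.

Lemma Delta_c_le_linear (r0 r : R) : 0 < r0 -> (Delta_c X r0 < +oo)%E ->
  0 <= r -> (Delta_c X r <= (fine (Delta_c X r0) / r0 * r)%:E)%E.
Proof.
move=> r0_gt0 /Delta_c_fineK D0 r_ge0.
rewrite -[r in Delta_c X r](divfK (lt0r_neq0 r0_gt0)).
apply: le_trans (Delta_c_scale_le _ _ (divr_ge0 r_ge0 (ltW r0_gt0))) _.
by rewrite -D0 -EFinM lee_fin mulrC mulrA mulrAC.
Qed.

Lemma Delta_u_gt0 (r0 r : R) : 0 < r0 -> (Delta_c X r0 < +oo)%E ->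
  0 < r -> (0 < Delta_u X r)%E.
Proof.
move=> r0_gt0 /Delta_c_fineK D0 r_gt0; set D := fine (Delta_c X r0).
have D_ge0 : 0 <= D by rewrite fine_ge0 // Delta_c_ge0.
have r0_le : (r0%:E <= Delta_u X (D + 1))%E.
  by apply: Delta_u_ge_of_Delta_c_lt; rewrite -D0 lte_fin ltrDl.
have t_gt0 : 0 < r / (D + 1) by rewrite divr_gt0 //; lra.
rewrite -[r](@divfK _ (D + 1)); last by rewrite gt_eqF //; lra.
apply: lt_le_trans (Delta_u_scale_ge _ _ t_gt0).
by rewrite mule_gt0 // (lt_le_trans _ r0_le).
Qed.

Lemma Delta_c_lt_pinfty (r0 r : R) : (0 < Delta_u X r0)%E -> 0 <= r ->
  (Delta_c X r < +oo)%E.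
Proof.
move=> /gt0_exists_fin_lt [d d_gt0 /Delta_c_le_of_Delta_u_gt Dd] r_ge0.
rewrite -[r](divfK (lt0r_neq0 d_gt0)).
have t_ge0 : 0 <= r / d by rewrite divr_ge0 // ltW.
apply: le_lt_trans (Delta_c_scale_le _ _ t_ge0) _.
by apply: le_lt_trans (lee_wpmul2l _ Dd) _; rewrite ?lee_fin // -EFinM ltry.
Qed.

End StoneModuli.

Theorem lemma3p7 (R : realType) (X : normedModType R) :
  let i   := exists Rr : R, 0 < Rr /\ (Delta_c X Rr < +oo)%E in
  let ii  := exists C : R, 0 <= C /\
               forall Rr : R, 0 <= Rr -> (Delta_c X Rr <= (C * Rr)%:E)%E in
  let iii := forall Rr : R, 0 <= Rr -> (Delta_c X Rr < +oo)%E in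
  let iv  := forall r : R, 0 < r -> (0 < Delta_u X r)%E in
  [/\ (i <-> ii), (ii <-> iii) & (iii <-> iv)].
Proof.
move=> i ii iii iv.
have i_ii : i -> ii.
  move=> [r0 [r0_gt0 fin]]; exists (fine (Delta_c X r0) / r0).
  split; last by move=> r; exact: Delta_c_le_linear.
  by rewrite divr_ge0 ?fine_ge0 ?Delta_c_ge0 // ltW.
have ii_iii : ii -> iii.
  by move=> [C [_ HC]] r r_ge0; exact: le_lt_trans (HC r r_ge0) (ltry _).
have iii_i : iii -> i by move=> H; exists 1; split; [exact: ltr01 | exact: H ler01].
have iii_iv : iii -> iv by move=> H r; exact: Delta_u_gt0 ltr01 (H 1 ler01).
have iv_iii : iv -> iii by move=> H r; exact: Delta_c_lt_pinfty (H 1 ltr01).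
by split; [split=> [/i_ii|/ii_iii/iii_i] | split=> [/ii_iii|/iii_i/i_ii]
           | split=> [/iii_iv|/iv_iii]].
Qed.
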